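(* Let $k,d$ be positive integers and let $0\le r\le k-1$ with $d\equiv r\pmod k$. There exists $n_0=n_0(d,k)$ such that for every $n\ge n_0$ and every $\mathcal{A}\subset 2^{[n]}$ with $\mathrm{VC}(\triangle\mathcal{A}^k)\le d$, we have $|\mathcal{A}|\le 2^r\binom{n-r}{\le\lfloor d/k\rfloor}$.
   Context: $[n]=\{1,\dots,n\}$. For $Y\subset[n]$, $Y$ is shattered by $\mathcal{F}\subset 2^{[n]}$ if $\{S\cap Y: S\in\mathcal{F}\}=2^Y$; $\mathrm{VC}(\mathcal{F})$ is the largest cardinality of a set shattered by $\mathcal{F}$. $\triangle\mathcal{A}^k=\{S_1\triangle\cdots\triangle S_k: S_i\in\mathcal{A}\ \forall i\in[k]\}$ (the $S_i$ need not be distinct), where $\triangle$ is symmetric difference. $\binom{m}{\le t}=\sum_{j=0}^{t}\binom{m}{j}$. *)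

From mathcomp Require Import all_boot.
Set Implicit Arguments. Unset Strict Implicit. Unset Printing Implicit Defensive.

Definition symd (T : finType) (A B : {set T}) : {set T} := (A :\: B) :|: (B :\: A).

Definition symd_big (T : finType) (k : nat) (S : {ffun 'I_k -> {set T}}) : {set T} :=
  \big[@symd T/set0]_(i < k) S i.

Definition symdk (T : finType) (A : {set {set T}}) (k : nat) : {set {set T}} :=
  [set symd_big S | S in [set S : {ffun 'I_k -> {set T}} | [forall i, S i \in A]]].

Definition shattered (T : finType) (F : {set {set T}}) (Y : {set T}) : bool :=
  [set S :&: Y | S in F] == powerset Y.

(* VC dimension: largest cardinality of a shattered set (0 if none) *)
Definition VC (T : finType) (F : {set {set T}}) : nat :=
  \max_(Y : {set T} | shattered F Y) #|Y|.

Definition binom_le (m t : nat) : nat := \sum_(0 <= j < t.+1) 'C(m, j).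

From mathcomp Require Import all_boot.
From mathcomp Require Import zify.
Set Implicit Arguments. Unset Strict Implicit. Unset Printing Implicit Defensive.

(* Down-shifting (removing a point from a member whenever the result is new) keeps
   [|A|] and creates no new set shattered by [A^k] under symmetric difference, so [A]
   may be assumed down-closed.  Then any [k] members of [A] have a union shattered by
   that family, hence of size at most [d = k t + r].
   Call [X] strong if, whatever [2 d] points are forbidden, [X] extends inside [A] by
   [t] fresh points.  Chaining such extensions shows that the union [H] of all strong
   sets has at most [r] points and that [|S :|: H| + (k - 1) t <= d] for [S] in [A].
   On the other hand, above a set with no strong superset, [k] pairwise disjoint
   extensions of size [> t] cannot exist, so they admit a hitting set of bounded size
   and are [O(n ^ (t - 1))] in number.  Splitting each member as [(S :&: H, S :\: H)]
   gives [|A| <= 2 ^ |H| * (binom(n - |H|, <= t) + O(n ^ (t - 1)))], which is at most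
   [2 ^ r * binom(n - r, <= t)] for large [n] (and outright when [|H| = r]). *)

Lemma binom_le0 m : binom_le m 0 = 1.
Proof. by rewrite /binom_le big_nat1_id addn0 bin0. Qed.

Lemma binom_leS m t : binom_le m t.+1 = binom_le m t + 'C(m, t.+1).
Proof. by rewrite /binom_le big_nat_recr. Qed.

Lemma binom_leSS m t : binom_le m.+1 t.+1 = binom_le m t.+1 + binom_le m t.
Proof.
rewrite /binom_le big_nat_recl // [in X in _ = X + _]big_nat_recl //.
rewrite !bin0 -addnA; congr (_ + _).
by rewrite -big_split /=; apply: eq_bigr => j _; apply: binS.
Qed.

Lemma leq_binom_le m m' t : m <= m' -> binom_le m t <= binom_le m' t.
Proof. by move=> le_mm'; apply: leq_sum => j _; apply: leq_bin2l. Qed.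

Lemma bin_le_binom_le m t : 'C(m, t) <= binom_le m t.
Proof. by case: t => [|t]; rewrite ?binom_le0 ?bin0 // binom_leS leq_addl. Qed.

Lemma binom_leD m a t :
  binom_le (m + a) t.+1 <= binom_le m t.+1 + a * binom_le (m + a) t.
Proof.
elim: a => [|a IHa]; first by rewrite addn0 mul0n addn0.
rewrite addnS binom_leSS mulSn.
have := leq_binom_le t (leqnSn (m + a)).
have : a * binom_le (m + a) t <= a * binom_le (m + a).+1 t.
  by rewrite leq_mul2l leq_binom_le ?orbT.
lia.
Qed.

Lemma leq_expn2r m n e : m <= n -> m ^ e <= n ^ e.
Proof. by case: e => [|e] le_mn //; rewrite leq_exp2r. Qed.

Lemma bin_le_expn n j : 'C(n, j) <= n ^ j.
Proof.
have ffact_le : n ^_ j <= n ^ j.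
  elim: j n => [|j IHj] n; first by rewrite ffactn0.
  rewrite ffactnS expnS leq_mul2l (leq_trans (IHj _)) ?orbT //.
  by rewrite leq_expn2r ?leq_pred.
by apply: leq_trans ffact_le; rewrite -bin_ffact leq_pmulr ?fact_gt0.
Qed.

Lemma binom_le_expn n t : 0 < n -> binom_le n t <= t.+1 * n ^ t.
Proof.
move=> n_gt0; rewrite -[t.+1]subn0 -sum_nat_const_nat /binom_le.
rewrite big_nat_cond [X in _ <= X]big_nat_cond; apply: leq_sum => j /andP[/andP[_ le_jt] _].
exact: leq_trans (bin_le_expn n j) (leq_pexp2l n_gt0 (le_jt : j <= t)).
Qed.

Lemma bin_dominates_expn K r t : 0 < t ->
  exists n0, forall n, n0 <= n -> K * n ^ t.-1 <= 'C(n - r, t).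
Proof.
case: t => // s _ /=.
have expn_le_ffact a i : a ^ i <= (a + i) ^_ i.
  elim: i => [|i IHi]; first by rewrite ffactn0.
  by rewrite addnS ffactSS expnS leq_mul // leqW ?leq_addr.
pose c := r + s.+1; pose A := K * s.+1`! * 2 ^ s.
exists (c + c + A) => n le_n; set a := n - c.
have -> : n - r = a + s.+1 by rewrite /a /c; lia.
rewrite -(leq_pmul2r (fact_gt0 s.+1)) bin_ffact.
apply: leq_trans (expn_le_ffact a s.+1); rewrite expnS.
apply: leq_trans (leq_mul (_ : A <= a) (leqnn (a ^ s))); last by rewrite /a /c; lia.
rewrite /A mulnAC -[X in _ <= X]mulnA -expnMn leq_mul // leq_expn2r //.
by rewrite /a /c; lia.
Qed.

(* Trading [r - h] points of the ground set for the factor [2 ^ (r - h)] pays for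
   the error term once [C(n - r, t + 1)] dominates it. *)
Lemma binom_le_absorb n h r t B : 0 < n -> h < r ->
  (r * t.+1 + B) * n ^ t <= 'C(n - r, t.+1) ->
  2 ^ h * (binom_le (n - h) t.+1 + B * n ^ t) <= 2 ^ r * binom_le (n - r) t.+1.
Proof.
move=> n_gt0 lt_hr big_n; set X := binom_le (n - r) t.+1.
have le_rn : r <= n.
  rewrite leqNgt; apply/negP => lt_nr; move: big_n; rewrite bin_small; last first.
    by rewrite (_ : n - r = 0) //; lia.
  have [r_neq0 n_neq0] : (r == 0) = false /\ (n == 0) = false by split; apply/eqP; lia.
  by rewrite leqn0 muln_eq0 expn_eq0 addn_eq0 muln_eq0 r_neq0 n_neq0.
have shift : binom_le (n - h) t.+1 <= X + r * t.+1 * n ^ t.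
  have := binom_leD (n - r) (r - h) t; rewrite (_ : n - r + (r - h) = n - h); last by lia.
  move/leq_trans; apply; rewrite leq_add2l -mulnA leq_mul ?leq_subr //.
  exact: leq_trans (leq_binom_le t (leq_subr h n)) (binom_le_expn t n_gt0).
have twoX : binom_le (n - h) t.+1 + B * n ^ t <= X * 2.
  rewrite muln2 -addnn; apply: leq_trans (leq_add shift (leqnn _)) _.
  rewrite -addnA leq_add2l -mulnDl; exact: leq_trans big_n (bin_le_binom_le _ _).
apply: leq_trans (leq_mul (leqnn _) twoX) _.
by rewrite mulnA mulnAC -expnSr leq_mul2r leq_pexp2l ?orbT.
Qed.

Section Shattering.
Variable T : finType.
Implicit Types (S U X Y : {set T}) (F G : {set {set T}}).

Lemma in_symd_big k (c : {ffun 'I_k -> {set T}}) y :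
  (y \in symd_big c) = odd (\sum_(i < k) (y \in c i)).
Proof.
rewrite /symd_big; elim/big_rec2: _ => [|i n X _ IH]; first by rewrite inE.
by rewrite /symd !inE oddD -IH; case: (y \in c i); case: (y \in X).
Qed.

Lemma symdkP F k X :
  reflect (exists2 c : {ffun 'I_k -> {set T}}, (forall i, c i \in F) & X = symd_big c)
          (X \in symdk F k).
Proof.
apply: (iffP imsetP) => [[c] | [c cF ->]].
  by rewrite inE => /forallP cF ->; exists c.
by exists c => //; rewrite inE; apply/forallP.
Qed.

Lemma shatteredP F Y :
  reflect (forall U, U \subset Y -> exists2 S, S \in F & S :&: Y = U) (shattered F Y).
Proof.
apply: (iffP eqP) => [FY U sUY | FY].
  have : U \in powerset Y by rewrite powersetE.
  by rewrite -FY => /imsetP[S SF ->]; exists S.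
apply/setP => U; rewrite powersetE; apply/imsetP/idP => [[S _ ->]|sUY].
  exact: subsetIr.
by have [S SF <-] := FY U sUY; exists S.
Qed.

Lemma card_le_VC F Y : shattered F Y -> #|Y| <= VC F.
Proof. by move=> shY; rewrite /VC (leq_bigmax_cond _ shY). Qed.

Lemma leq_VC F G : (forall Y, shattered F Y -> shattered G Y) -> VC F <= VC G.
Proof. by move=> FG; apply/bigmax_leqP => Y /FG; apply: card_le_VC. Qed.

End Shattering.

Definition downclosed (T : finType) (F : {set {set T}}) :=
  [forall S in F, forall y in S, S :\ y \in F].

Section DownShift.
Variables (T : finType) (x : T) (F : {set {set T}}).
Implicit Types (S Y : {set T}).

Definition shift S := if (x \in S) && (S :\ x \notin F) then S :\ x else S.
Definition downshift := [set shift S | S in F].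
Definition weight (G : {set {set T}}) := \sum_(S in G) #|S|.

Lemma in_shift S y : y != x -> (y \in shift S) = (y \in S).
Proof. by move=> yx; rewrite /shift; case: ifP => // _; rewrite !inE yx. Qed.

Lemma shift_id S : x \in shift S -> shift S = S /\ S :\ x \in F.
Proof.
rewrite /shift; case: ifP => [_|]; first by rewrite !inE eqxx.
by move=> /negbT; rewrite negb_and negbK => /orP[/negP|].
Qed.

Lemma shift_inj : {in F &, injective shift}.
Proof.
move=> S1 S2 S1F S2F; rewrite /shift.
case: ifP => [/andP[xS1 S1xF] | _]; case: ifP => [/andP[xS2 S2xF] | _] //.
- move/setP => E; apply/setP => y; have [->|yx] := eqVneq y x; first by rewrite xS1 xS2.
  by move: (E y); rewrite !inE yx.
- by move=> E; rewrite E S2F in S1xF.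
- by move=> E; rewrite -E S1F in S2xF.
Qed.

Lemma card_downshift : #|downshift| = #|F|.
Proof. exact/card_in_imset/shift_inj. Qed.

Lemma weight_downshift S :
  S \in F -> x \in S -> S :\ x \notin F -> weight downshift < weight F.
Proof.
move=> SF xS SxF; rewrite /weight big_imset /=; last exact: shift_inj.
rewrite (bigD1 S) //= [X in _ < X](bigD1 S SF) /=.
have -> : shift S = S :\ x by rewrite /shift xS SxF.
rewrite -addSn leq_add ?(cardsD1 x S) ?xS //.
apply: leq_sum => S' _; rewrite /shift; case: ifP => // /andP[xS' _].
by rewrite (cardsD1 x S') xS' leq_addl.
Qed.

Variable k : nat.
Implicit Types (a c : {ffun 'I_k -> {set T}}).

Lemma downshift_lift c : (forall i, c i \in downshift) ->
  exists2 a : {ffun 'I_k -> {set T}}, (forall i, a i \in F) & forall i, shift (a i) = c i.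
Proof.
move=> cF; have /fin_all_exists[a aP] : forall i, exists S, S \in F /\ shift S = c i.
  by move=> i; have /imsetP[S SF ->] := cF i; exists S.
by exists [ffun i => a i] => i; rewrite ffunE; case: (aP i).
Qed.

Lemma symd_big_shift a c : (forall i, shift (a i) = c i) ->
  symd_big a :\ x = symd_big c :\ x.
Proof.
move=> ac; apply/setP => y; rewrite !inE; have [//|yx] := eqVneq y x.
rewrite !in_symd_big; congr odd; apply: eq_bigr => i _.
by rewrite -ac in_shift.
Qed.

(* Toggling [x] is possible because some [c j] keeps [x], so [a j :\ x] is also in [F]. *)
Lemma symd_big_toggle a c : (forall i, a i \in F) -> (forall i, shift (a i) = c i) ->
  x \in symd_big c -> exists2 b : {ffun 'I_k -> {set T}}, (forall i, b i \in F) &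
    symd_big b :\ x = symd_big a :\ x /\ (x \in symd_big b) = ~~ (x \in symd_big a).
Proof.
move=> aF ac xc; have [j xcj] : exists j, x \in c j.
  apply/existsP; move: xc; rewrite in_symd_big; apply: contraTT => /existsPn cx.
  by rewrite big1 // => i _; rewrite (negbTE (cx i)).
have [aj ajxF] : shift (a j) = a j /\ a j :\ x \in F by apply: shift_id; rewrite ac.
have xaj : x \in a j by rewrite -aj ac.
pose b := [ffun i => if i == j then a j :\ x else a i].
exists b => [i|]; first by rewrite ffunE; case: eqP.
split.
  apply/setP => y; rewrite !inE; have [//|yx] := eqVneq y x.
  rewrite !in_symd_big; congr odd; apply: eq_bigr => i _.
  by rewrite ffunE; case: eqP => // ->; rewrite !inE yx.
rewrite !in_symd_big (bigD1 j) //= [in RHS](bigD1 j) //= ffunE eqxx !inE eqxx xaj.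
rewrite /= add0n oddD negbK; congr odd; apply: eq_bigr => i ij.
by rewrite ffunE (negbTE ij).
Qed.

Lemma downshift_shattered Y :
  shattered (symdk downshift k) Y -> shattered (symdk F k) Y.
Proof.
move=> /shatteredP shY; apply/shatteredP => U sUY.
pose U' := if x \in Y then x |: U else U.
have sU'Y : U' \subset Y by rewrite /U'; case: ifP => // xY; rewrite subUset sub1set xY.
have [_ /symdkP[c cF ->] cY] := shY U' sU'Y.
have [a aF ac] := downshift_lift cF.
have [b bF [bc bx]] : exists2 b : {ffun 'I_k -> {set T}}, (forall i, b i \in F) &
    symd_big b :\ x = symd_big c :\ x /\ (x \in Y -> (x \in symd_big b) = (x \in U)).
  have [xY|xY] := boolP (x \in Y); last first.
    by exists a => //; split=> [|/negP//]; apply: symd_big_shift.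
  have xc : x \in symd_big c.
    by move/setP/(_ x): cY; rewrite /U' xY !inE eqxx xY andbT => ->.
  have [<-|ne] := eqVneq (x \in symd_big a) (x \in U).
    by exists a => //; split=> //; apply: symd_big_shift.
  have [b bF [ba bx]] := symd_big_toggle aF ac xc.
  exists b => //; split=> [|_]; first by rewrite ba; apply: symd_big_shift.
  by rewrite bx; case: (x \in U) ne; case: (_ \in _).
exists (symd_big b); first by apply/symdkP; exists b.
apply/setP => y; rewrite inE; have [->|yx] := eqVneq y x.
  have [/bx->|xY] := boolP (x \in Y); first by rewrite andbT.
  by rewrite andbF; apply/esym/(contraNF (subsetP sUY x)).
move/setP/(_ y): bc; rewrite !inE yx /= => ->.
by move/setP/(_ y): cY; rewrite inE => ->; rewrite /U'; case: ifP; rewrite // !inE (negbTE yx).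
Qed.

End DownShift.

Section DownClosed.
Variable T : finType.
Implicit Types (S U X : {set T}) (F D : {set {set T}}).

Lemma downclosedP D S S' : downclosed D -> S \in D -> S' \subset S -> S' \in D.
Proof.
move=> /forall_inP Ddown; move: {2}#|S :\: S'| (erefl #|S :\: S'|) => m.
elim: m S => [|m IHm] S cS SD sS'S.
  suff -> : S' = S by [].
  by apply/eqP; rewrite eqEsubset sS'S -setD_eq0 -cards_eq0 cS.
have [y] : exists y, y \in S :\: S' by apply/set0Pn; rewrite -card_gt0 cS.
rewrite inE => /andP[yS' yS]; apply: (IHm (S :\ y)).
- by move: cS; rewrite (cardsD1 y) inE yS' yS setDDl setUC -setDDl => -[].
- by move/forall_inP: (Ddown S SD); apply.
- by rewrite subsetD1 sS'S.
Qed.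

Lemma downshift_exists k F : exists2 D, downclosed D &
  #|D| = #|F| /\ forall Y, shattered (symdk D k) Y -> shattered (symdk F k) Y.
Proof.
elim: {F}_.+1 {-2}F (ltnSn (weight F)) => // m IHm F ltF.
have [Fdown|] := boolP (downclosed F); first by exists F.
rewrite negb_forall_in => /exists_inP[S SF]; rewrite negb_forall_in => /exists_inP[x xS SxF].
have [D Ddown [cD shD]] := IHm (downshift x F) (leq_trans (weight_downshift SF xS SxF) ltF).
exists D => //; split; first by rewrite cD card_downshift.
by move=> Y /shD; apply: downshift_shattered.
Qed.

(* Each point of [U] is put into the first member of [s] containing it. *)
Lemma downclosed_shattered k D (s : seq {set T}) : downclosed D ->
  s != [::] -> size s <= k -> all (mem D) s -> shattered (symdk D k) (\bigcup_(X <- s) X).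
Proof.
move=> Ddown s_neq0 sk /allP sD; have set0D : set0 \in D.
  case: s s_neq0 sD {sk} => // X s _ sD.
  exact: downclosedP Ddown (sD X (mem_head _ _)) (sub0set _).
apply/shatteredP => U sU; pose pos y := find (fun X => y \in X) s.
have pos_lt y : y \in U -> pos y < k.
  move/(subsetP sU); rewrite bigcup_seq => /bigcupP[X Xs yX].
  by apply: leq_trans sk; rewrite -has_find; apply/hasP; exists X.
pose c := [ffun i : 'I_k => [set y in U | pos y == i]].
exists (symd_big c).
  apply/symdkP; exists c => // i; apply: downclosedP Ddown _ (_ : _ \subset nth set0 s i).
    have [lt_is|le_si] := ltnP i (size s); last by rewrite nth_default.
    exact/sD/mem_nth.
  apply/subsetP => y; rewrite ffunE inE => /andP[/(subsetP sU) yU /eqP <-].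
  apply: (nth_find _ (a := fun X => y \in X)).
  by move: yU; rewrite bigcup_seq => /bigcupP[X Xs yX]; apply/hasP; exists X.
apply/setP => y; rewrite inE in_symd_big; have [yU|yU] := boolP (y \in U); last first.
  by rewrite big1 // => i _; rewrite ffunE inE (negbTE yU).
rewrite (subsetP sU) // andbT (bigD1 (Ordinal (pos_lt y yU))) //= big1.
  by rewrite ffunE inE yU eqxx.
move=> i ne_i; rewrite ffunE inE yU /=; case: eqP => // posy.
by rewrite -(inj_eq val_inj) /= posy eqxx in ne_i.
Qed.

End DownClosed.

Section Covers.
Variable T : finType.
Implicit Types (C W : {set T}) (G : {set {set T}}).

Lemma cardsU_disjoint (A B : {set T}) : [disjoint A & B] -> #|A :|: B| = #|A| + #|B|.
Proof. by move=> dAB; apply/eqP; rewrite (leq_card_setU A B).2. Qed.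

Lemma subset_of_card (A : {set T}) n : n <= #|A| -> exists2 P : {set T}, P \subset A & #|P| = n.
Proof.
move=> le_nA; exists [set y in take n (enum A)].
  by apply/subsetP => y; rewrite inE => /mem_take; rewrite mem_enum.
by rewrite cardsE (card_uniqP (take_uniq _ (enum_uniq _))) size_takel // -cardE.
Qed.

Lemma card_bigcup_le (I : finType) (P : pred I) (f : I -> {set T}) :
  #|\bigcup_(i | P i) f i| <= \sum_(i | P i) #|f i|.
Proof.
elim/big_rec2: _ => [|i m B _ IH]; first by rewrite cards0.
by apply: leq_trans (leq_card_setU _ _).1 _; rewrite leq_add2l.
Qed.

Lemma card_bigcup_disjoint (ws : seq {set T}) s :
  pairwise (fun A B : {set T} => [disjoint A & B]) ws -> all (fun W => #|W| == s) ws ->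
  #|\bigcup_(W <- ws) W| = size ws * s.
Proof.
elim: ws => [|W ws IH] /=; first by rewrite big_nil cards0.
move=> /andP[dW dws] /andP[/eqP cW cws]; rewrite big_cons mulSn -IH // -cW.
rewrite cardsU_disjoint // bigcup_seq; apply/bigcup_disjointP => V Vws.
exact: (allP dW).
Qed.

(* Greedily collect pairwise disjoint members; their union meets every member. *)
Lemma hitting_set_of_no_matching G s m :
  (forall W, W \in G -> #|W| = s) ->
  (forall ws : seq {set T}, {subset ws <= G} ->
    pairwise (fun A B : {set T} => [disjoint A & B]) ws -> size ws != m) ->
  exists2 C : {set T}, #|C| <= m.-1 * s & forall W, W \in G -> ~~ [disjoint W & C].
Proof.
elim: m G => [|m IHm] G Gs noM.
  have sub0 : {subset [::] <= G} by [].
  by have := noM [::] sub0 isT.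
have [->|[W0 W0G]] := set_0Vmem G; first by exists set0; rewrite ?cards0 // => W; rewrite inE.
case: m IHm noM => [|m] IHm noM.
  have sub : {subset [:: W0] <= G} by move=> W; rewrite inE => /eqP->.
  by have := noM _ sub isT.
pose G' := [set W in G | [disjoint W & W0]].
have G's W : W \in G' -> #|W| = s by rewrite inE => /andP[/Gs].
have noM' (ws : seq {set T}) : {subset ws <= G'} ->
    pairwise (fun A B : {set T} => [disjoint A & B]) ws -> size ws != m.+1.
  move=> wsG' dws; have /noM : {subset W0 :: ws <= G}.
    by move=> W; rewrite inE => /predU1P[->//|/wsG']; rewrite inE => /andP[].
  rewrite /= dws andbT eqSS; apply; apply/allP => W /wsG'.
  by rewrite inE disjoint_sym => /andP[].
have [C' cC' hitC'] := IHm G' G's noM'.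
exists (W0 :|: C').
  by apply: leq_trans (leq_card_setU _ _).1 _; rewrite (Gs _ W0G) /= mulSn leq_add2l.
move=> W WG; rewrite -setI_eq0 setIUr setU_eq0 !setI_eq0 negb_and.
by case: (boolP [disjoint W & W0]) => //= dW; rewrite hitC' // inE WG dW.
Qed.

Lemma card_sets_containing z s :
  #|[set W : {set T} | (z \in W) && (#|W| == s)]| <= 'C(#|T|, s.-1).
Proof.
rewrite -card_draws -(card_in_imset (f := fun W => W :\ z)); last first.
  move=> W1 W2; rewrite !inE => /andP[zW1 _] /andP[zW2 _] /setP E; apply/setP => y.
  by have := E y; rewrite !inE; case: eqVneq => [->|]; rewrite ?zW1 ?zW2.
apply/subset_leq_card/subsetP => V /imsetP[W]; rewrite !inE => /andP[zW /eqP <-] ->.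
by rewrite (cardsD1 z W) zW.
Qed.

End Covers.

Section Extremal.
Variables (T : finType) (k d : nat) (D : {set {set T}}).
Hypotheses (k_gt0 : 0 < k) (Ddown : downclosed D).
Hypothesis union_le :
  forall s : seq {set T}, size s <= k -> all (mem D) s -> #|\bigcup_(X <- s) X| <= d.
Implicit Types (J H P S W X Y Z : {set T}).

Local Notation t := (d %/ k).
Local Notation r := (d %% k).

Lemma d_eq : d = k * t + r. Proof. by rewrite mulnC -divn_eq. Qed.
Lemma r_lt_k : r < k. Proof. by rewrite ltn_pmod. Qed.

Lemma card_le_d S : S \in D -> #|S| <= d.
Proof. by move=> SD; have := @union_le [:: S]; rewrite big_seq1 /= SD; apply. Qed.

(* The bound [2 * d] leaves room to avoid [k] sets of total size at most [d]
   together with [k] previously chosen [t]-sets. *)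
Definition strong X := [forall Z : {set T}, (#|Z| <= 2 * d) ==>
  [exists W : {set T}, [&& #|W| == t, [disjoint W & Z] & W :|: X \in D]]].

Lemma strongP X : strong X ->
  forall Z, #|Z| <= 2 * d -> exists W, [/\ #|W| = t, [disjoint W & Z] & W :|: X \in D].
Proof.
move=> /forallP Xs Z cZ; have /implyP/(_ cZ)/existsP[W /and3P[/eqP cW dWZ WXD]] := Xs Z.
by exists W.
Qed.

Lemma strong_in X : strong X -> X \in D.
Proof.
move=> /strongP/(_ set0); rewrite cards0 => -[//|W [_ _ WXD]].
exact: downclosedP Ddown WXD (subsetUr _ _).
Qed.

Lemma strong_set0 X : strong X -> strong set0.
Proof.
move=> /strongP Xs; apply/forallP => Z; apply/implyP => /Xs[W [cW dWZ WXD]].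
apply/existsP; exists W; rewrite cW eqxx dWZ setU0.
exact: downclosedP Ddown WXD (subsetUl _ _).
Qed.

Lemma strong_of_t0 X : t = 0 -> X \in D -> strong X.
Proof.
move=> t0 XD; apply/forallP => Z; apply/implyP => _; apply/existsP; exists set0.
by rewrite cards0 t0 set0U XD -setI_eq0 set0I !eqxx.
Qed.

Lemma strong_extensions (s : seq {set T}) Z : all strong s -> #|Z| + size s * t <= 2 * d ->
  exists ps : seq ({set T} * {set T}), [/\ unzip2 ps = s,
    all (fun p => p.1 :|: p.2 \in D) ps & #|Z :|: \bigcup_(p <- ps) p.1| = #|Z| + size s * t].
Proof.
elim: s => [|X s IHs] /=; first by move=> _ _; exists [::]; rewrite big_nil setU0 mul0n addn0.
move=> /andP[/strongP Xs ss] cZ; rewrite mulSn in cZ.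
have [|ps [ps_s psD cps]] := IHs ss; first by rewrite (leq_trans _ cZ) ?leq_add2l ?leq_addl.
have [|W [cW dW WXD]] := Xs (Z :|: \bigcup_(p <- ps) p.1).
  by rewrite cps (leq_trans _ cZ) ?leq_add2l ?leq_addl.
exists ((W, X) :: ps); rewrite /= ps_s WXD psD big_cons setUCA; split=> //.
by rewrite /= cardsU_disjoint // cps cW mulSn addnCA.
Qed.

Lemma card_union_strong ms s : all (mem D) ms -> all strong s -> size ms + size s <= k ->
  #|\bigcup_(X <- ms ++ s) X| + size s * t <= d.
Proof.
move=> msD ss sk; have sD : all (mem D) (ms ++ s).
  by rewrite all_cat msD; apply/allP => X /(allP ss)/strong_in.
set Z := \bigcup_(X <- _) X.
have cZ : #|Z| <= d by apply: union_le; rewrite ?size_cat.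
have cst : size s * t <= d.
  rewrite [X in _ <= X]d_eq (leq_trans _ (leq_addr _ _)) // leq_mul2r.
  by rewrite (leq_trans (leq_addl _ _) sk) orbT.
have [|ps [ps_s psD cps]] := strong_extensions (Z := Z) ss.
  by rewrite mul2n -addnn leq_add.
rewrite -cps; pose L := ms ++ [seq p.1 :|: p.2 | p <- ps].
have -> : Z :|: \bigcup_(p <- ps) p.1 = \bigcup_(X <- L) X.
  rewrite /Z /L !big_cat big_map /= -setUA; congr (_ :|: _).
  by rewrite big_split /= -ps_s big_map setUC.
apply: union_le; rewrite /L ?all_cat ?msD ?all_map //.
by rewrite size_cat size_map (_ : size ps = size s) // -ps_s size_map.
Qed.

Definition core := \bigcup_(X | strong X) X.

Lemma core_cover P : P \subset core ->
  exists s, [/\ all strong s, size s = #|P| & P \subset \bigcup_(X <- s) X].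
Proof.
move=> sPcore; pose f y := odflt set0 [pick X | strong X & y \in X].
have fP y : y \in P -> strong (f y) /\ y \in f y.
  move/(subsetP sPcore)/bigcupP=> [X Xs yX]; rewrite /f.
  by case: pickP => [Y /andP[]//|/(_ X)]; rewrite Xs yX.
exists [seq f y | y <- enum P]; split.
- by apply/allP => X /mapP[y]; rewrite mem_enum => /fP[? _] ->.
- by rewrite size_map -cardE.
apply/subsetP => y yP; rewrite bigcup_seq; apply/bigcupP.
by exists (f y); [rewrite map_f ?mem_enum | case: (fP y yP)].
Qed.

Lemma core_bound ms P m : strong set0 -> all (mem D) ms -> P \subset core -> #|P| <= m ->
  size ms + m <= k -> #|\bigcup_(X <- ms) X :|: P| + m * t <= d.
Proof.
move=> s0 msD sPcore cPm smk; have [s [ss cs sPs]] := core_cover sPcore.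
pose s' := s ++ nseq (m - #|P|) set0.
have ss' : all strong s' by rewrite all_cat ss all_nseq s0 orbT.
have cs' : size s' = m by rewrite size_cat size_nseq cs subnKC.
have := card_union_strong msD ss'; rewrite cs' => /(_ smk) bound_s'.
apply: leq_trans bound_s'.
rewrite leq_add2r subset_leq_card // big_cat setUS // big_cat /=.
exact: subset_trans sPs (subsetUl _ _).
Qed.

Lemma card_core : strong set0 -> #|core| <= r.
Proof.
move=> s0; rewrite leqNgt; apply/negP => lt_r.
have [P sPcore cP] := subset_of_card lt_r.
have := core_bound (ms := [::]) s0 isT sPcore (_ : #|P| <= k) (leqnn k).
rewrite big_nil set0U cP => /(_ r_lt_k); rewrite [X in _ <= X]d_eq mulnC.
by rewrite addnC leq_add2l ltnn.
Qed.

Lemma card_setU_core S : strong set0 -> S \in D -> #|S :|: core| + (k - 1) * t <= d.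
Proof.
move=> s0 SD; have r_le : r <= k - 1 by have := r_lt_k; lia.
have := core_bound (ms := [:: S]) s0 _ (subxx core) (leq_trans (card_core s0) r_le).
by rewrite /= SD big_seq1; apply; rewrite // add1n subn1 prednK.
Qed.

Definition ext J H s := [set W : {set T} | [&& [disjoint W & H], W :|: J \in D & #|W| == s]].

(* Above [t], [k] pairwise disjoint extensions of [J] would give [k] members of [D]
   whose union exceeds [d]. *)
Lemma ext_hitting_set J H s : t < s ->
  exists2 C : {set T}, #|C| <= (k - 1) * s & forall W, W \in ext J H s -> ~~ [disjoint W & C].
Proof.
move=> lt_ts; rewrite subn1.
apply: hitting_set_of_no_matching => [W|ws wsE dws]; first by rewrite inE => /and3P[_ _ /eqP].
apply/negP => /eqP sws; have wsD : all (mem D) [seq W :|: J | W <- ws].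
  by rewrite all_map; apply/allP => W /wsE; rewrite inE => /and3P[].
have sub : \bigcup_(W <- ws) W \subset \bigcup_(X <- [seq W :|: J | W <- ws]) X.
  rewrite big_map; apply/subsetP => y; rewrite !bigcup_seq => /bigcupP[W Wws yW].
  by apply/bigcupP; exists W; rewrite // inE yW.
have := leq_trans (subset_leq_card sub) (union_le _ wsD); rewrite size_map sws.
have wss : all (fun W => #|W| == s) ws by apply/allP => W /wsE; rewrite inE => /and3P[].
rewrite (card_bigcup_disjoint dws wss) sws => /(_ (leqnn k)); apply/negP; rewrite -ltnNge.
rewrite [X in X < _]d_eq; apply: leq_trans (leq_mul (leqnn k) lt_ts).
by rewrite mulnS addnC ltn_add2r r_lt_k.
Qed.

Lemma card_ext_step J H s B : t < s ->
  (forall c, c \notin H -> #|ext (c |: J) (c |: H) s.-1| <= B) -> #|ext J H s| <= k * s * B.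
Proof.
move=> lt_ts extB; have [C cC hitC] := ext_hitting_set J H lt_ts.
have sub : ext J H s \subset \bigcup_(c in C :\: H) [set W in ext J H s | c \in W].
  apply/subsetP => W WE; have /pred0Pn[c /andP[cW cC']] := hitC W WE.
  move: WE; rewrite inE => /and3P[dWH WJD cWs].
  by apply/bigcupP; exists c; rewrite !inE ?(disjointFr dWH cW) ?dWH ?WJD ?cC' ?cWs ?cW.
apply: leq_trans (subset_leq_card sub) _; apply: leq_trans (card_bigcup_le _ _) _.
apply: leq_trans (_ : \sum_(c in C :\: H) B <= _); last first.
  rewrite sum_nat_const leq_mul2r (leq_trans (subset_leq_card (subsetDl C H))) ?orbT //.
  by rewrite (leq_trans cC) // leq_mul2r leq_subr orbT.
apply: leq_sum => c; rewrite inE => /andP[cH _]; apply: leq_trans (extB c cH).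
rewrite -(card_in_imset (f := fun W => W :\ c)); last first.
  move=> W1 W2; rewrite !inE => /andP[_ cW1] /andP[_ cW2] /setP E; apply/setP => y.
  by have := E y; rewrite !inE; case: eqVneq => [->|]; rewrite ?cW1 ?cW2.
apply/subset_leq_card/subsetP => V /imsetP[W].
rewrite !inE => /andP[/and3P[dWH WJD /eqP cW] cW'] ->; rewrite (cardsD1 c) cW' in cW.
rewrite -cW /= eqxx andbT setUCA setUA setD1K // WJD andbT.
rewrite -setI_eq0 -subset0; apply/subsetP => y; rewrite !inE.
by case: eqVneq => //= _ /andP[yW yH]; rewrite (disjointFr dWH yW) in yH.
Qed.

Fixpoint ext_bound j := if j is j'.+1 then k * (t + j) * ext_bound j' else 2 * d.

Local Notation u := 'C(#|T|, t.-1).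

(* Above a set with no strong superset, the [t]-extensions are few: they all meet
   the [Z] witnessing non-strongness. *)
Lemma card_ext_no_strong J H j : (forall Y, J \subset Y -> ~~ strong Y) ->
  #|ext J H (t + j)| <= ext_bound j * u.
Proof.
elim: j J H => [|j IHj] J H noJ; last first.
  rewrite /= -mulnA addnS; apply: card_ext_step => [|c _]; first by rewrite ltnS leq_addr.
  by apply: IHj => Y /(subset_trans (subsetUr _ _)); apply: noJ.
have := noJ J (subxx J); rewrite negb_forall => /existsP[Z].
rewrite negb_imply negb_exists => /andP[cZ /forallP noW].
have sub : ext J H (t + 0) \subset
    \bigcup_(z in Z) [set W : {set T} | (z \in W) && (#|W| == t)].
  apply/subsetP => W; rewrite inE addn0 => /and3P[_ WJD cW].
  have /pred0Pn[z /andP[zW zZ]] : ~~ [disjoint W & Z] by move: (noW W); rewrite cW WJD andbT.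
  by apply/bigcupP; exists z; rewrite // inE cW andbT.
apply: leq_trans (subset_leq_card sub) _; apply: leq_trans (card_bigcup_le _ _) _.
apply: (@leq_trans (\sum_(z in Z) u)).
  by apply: leq_sum => z _; apply: card_sets_containing.
by rewrite sum_nat_const leq_mul2r cZ orbT.
Qed.

Lemma card_ext_core J j : #|ext J core (t + j.+1)| <= ext_bound j.+1 * u.
Proof.
rewrite /= -mulnA addnS; apply: card_ext_step => [|c cH]; first by rewrite ltnS leq_addr.
apply: card_ext_no_strong => Y sY; apply: contra cH => Ys.
by apply/bigcupP; exists Y; rewrite // (subsetP sY) // !inE eqxx.
Qed.

Lemma card_ext_le J H s : #|ext J H s| <= 'C(#|T| - #|H|, s).
Proof.
rewrite [#|T| - _](_ : _ = #|~: H|); last by rewrite [in RHS]cardsCs setCK.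
rewrite -cards_draws; apply/subset_leq_card/subsetP => W.
by rewrite !inE -disjoints_subset => /and3P[-> _ ->].
Qed.

Lemma ext_core_eq0 J s : strong set0 -> #|core| = r \/ t = 0 -> t < s ->
  ext J core s = set0.
Proof.
move=> s0 core_r lt_ts; apply/setP => W; rewrite !inE; apply/and3P => -[dW WJD /eqP cW].
case: core_r => [cr|t0].
  have := card_setU_core s0 WJD; apply/negP; rewrite -ltnNge.
  have : #|W :|: core| <= #|W :|: J :|: core| by rewrite subset_leq_card // setSU ?subsetUl.
  rewrite cardsU_disjoint // cW cr [X in X < _]d_eq mulnBl mul1n.
  have : k * t.+1 <= k * s by rewrite leq_mul2l lt_ts orbT.
  have : t <= k * t by rewrite leq_pmull.
  by rewrite mulnS; move: (k * t) => kt; lia.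
have sWcore : W \subset core.
  exact: subset_trans (subsetUl W J) (bigcup_sup _ (strong_of_t0 t0 WJD)).
rewrite -(setIidPl sWcore) (disjoint_setI0 dW) cards0 in cW.
by rewrite -cW t0 in lt_ts.
Qed.

Lemma card_le_sum_ext H :
  #|D| <= \sum_(0 <= s < d.+1) \sum_(J in powerset H) #|ext J H s|.
Proof.
rewrite -(card_in_imset (f := fun S => (S :&: H, S :\: H)) (D := D)); last first.
  move=> S1 S2 _ _ [E1 E2]; apply/setP => y; have [yH|yH] := boolP (y \in H).
    by move/setP/(_ y): E1; rewrite !inE yH !andbT.
  by move/setP/(_ y): E2; rewrite !inE yH.
have sub : [set (S :&: H, S :\: H) | S in D] \subset
    \bigcup_(s < d.+1) \bigcup_(J in powerset H) [set (J, W) | W in ext J H s].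
  apply/subsetP => _ /imsetP[S SD ->].
  have lt_Sd : #|S :\: H| < d.+1.
    by rewrite ltnS (leq_trans _ (card_le_d SD)) // subset_leq_card ?subsetDl.
  apply/bigcupP; exists (Ordinal lt_Sd) => //=.
  apply/bigcupP; exists (S :&: H); first by rewrite powersetE subsetIr.
  apply/imsetP; exists (S :\: H) => //; rewrite !inE setUC setID SD eqxx andbT.
  by rewrite disjoints_subset setDE subsetIr.
apply: leq_trans (subset_leq_card sub) _; rewrite big_mkord.
apply: leq_trans (card_bigcup_le _ _) _; apply: leq_sum => s _.
apply: leq_trans (card_bigcup_le _ _) _; apply: leq_sum => J _.
exact: leq_imset_card.
Qed.

Lemma card_le_split H p a b : p <= d.+1 ->
  (forall J s, J \subset H -> s < p -> #|ext J H s| <= a s) ->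
  (forall J s, J \subset H -> p <= s <= d -> #|ext J H s| <= b) ->
  #|D| <= 2 ^ #|H| * (\sum_(0 <= s < p) a s + d.+1 * b).
Proof.
move=> le_pd low high; apply: leq_trans (card_le_sum_ext H) _.
rewrite (big_cat_nat (leq0n p) le_pd) mulnDr big_distrr leq_add //.
  rewrite big_nat_cond [X in _ <= X]big_nat_cond; apply: leq_sum => s /andP[/andP[_ lt_sp] _].
  rewrite /= -card_powerset -sum_nat_const; apply: leq_sum => J.
  by rewrite powersetE => /low; apply.
apply: (@leq_trans (\sum_(p <= s < d.+1) 2 ^ #|H| * b)).
  rewrite big_nat_cond [X in _ <= X]big_nat_cond; apply: leq_sum => s /andP[/andP[le_ps lt_sd] _].
  rewrite -card_powerset -sum_nat_const; apply: leq_sum => J.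
  by rewrite powersetE => /high; apply; rewrite le_ps -ltnS.
by rewrite sum_nat_const_nat mulnCA leq_mul2l leq_mul2r leq_subr !orbT.
Qed.

Lemma leq_ext_bound : {homo ext_bound : i j / i <= j}.
Proof.
apply: homo_leq => [//|j i l|j]; first exact: leq_trans.
by rewrite /= leq_pmull // muln_gt0 k_gt0 addnS.
Qed.

Lemma le_t_d : t <= d. Proof. exact: leq_div. Qed.

Lemma card_D_core_tight : strong set0 -> #|core| = r \/ t = 0 ->
  #|D| <= 2 ^ #|core| * binom_le (#|T| - #|core|) t.
Proof.
move=> s0 core_r; have := @card_le_split core t.+1 (fun s => 'C(#|T| - #|core|, s)) 0.
rewrite muln0 addn0; apply=> [|J s _ _|J s _ /andP[lt_ts _]]; first by rewrite ltnS le_t_d.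
  exact: card_ext_le.
by rewrite ext_core_eq0 ?cards0.
Qed.

Lemma card_D_core : strong set0 ->
  #|D| <= 2 ^ #|core| * (binom_le (#|T| - #|core|) t + d.+1 * (ext_bound d * u)).
Proof.
move=> s0; apply: card_le_split => [|J s _ _|J s _ /andP[lt_ts le_sd]].
- by rewrite ltnS le_t_d.
- exact: card_ext_le.
rewrite -(subnKC lt_ts) addSnnS; apply: leq_trans (card_ext_core _ _) _.
by rewrite leq_mul2r leq_ext_bound ?orbT // subnSK // (leq_trans (leq_subr t s)).
Qed.

Lemma card_D_no_strong : ~~ strong set0 ->
  #|D| <= binom_le #|T| t.-1 + d.+1 * (ext_bound d * u).
Proof.
move=> ns0; have nostrong Y : ~~ strong Y by apply: contra ns0; apply: strong_set0.
have low J s : J \subset set0 -> s < t -> #|ext J set0 s| <= 'C(#|T|, s).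
  by have := card_ext_le J set0 s; rewrite cards0 subn0.
have high J s : J \subset set0 -> t <= s <= d -> #|ext J set0 s| <= ext_bound d * u.
  move/subset_leq_card; rewrite cards0 leqn0 cards_eq0 => /eqP-> /andP[le_ts le_sd].
  rewrite -(subnKC le_ts); apply: leq_trans (card_ext_no_strong _ _ (fun Y _ => nostrong Y)) _.
  by rewrite leq_mul2r leq_ext_bound ?orbT // (leq_trans (leq_subr t s)).
have := card_le_split (leq_trans le_t_d (leqnSn d)) low high.
rewrite cards0 expn0 mul1n => /leq_trans; apply; rewrite leq_add2r.
by case: (d %/ k) => [|t'] /=; [rewrite big_geq | apply: leqnn].
Qed.

Definition extremal_const := t + r * t + d.+1 * ext_bound d.

Lemma card_D_extremal : 0 < #|T| ->
  (0 < t -> extremal_const * #|T| ^ t.-1 <= 'C(#|T| - r, t)) ->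
  #|D| <= 2 ^ r * binom_le (#|T| - r) t.
Proof.
move=> n_gt0 big_n; have [->|[S SD]] := set_0Vmem D; first by rewrite cards0.
have Bu_le : d.+1 * (ext_bound d * u) <= d.+1 * ext_bound d * #|T| ^ t.-1.
  by rewrite mulnA leq_mul2l bin_le_expn orbT.
have [s0|ns0] := boolP (strong set0); last first.
  have t_gt0 : 0 < t.
    rewrite lt0n; apply: contra ns0 => /eqP t0.
    exact: strong_of_t0 t0 (downclosedP Ddown SD (sub0set S)).
  apply: leq_trans (card_D_no_strong ns0) _.
  apply: leq_trans (_ : _ <= extremal_const * #|T| ^ t.-1) _.
    have := binom_le_expn t.-1 n_gt0; rewrite prednK // => le_bin.
    by rewrite /extremal_const -addnA mulnDl leq_add // (leq_trans Bu_le) // mulnDl leq_addl.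
  apply: leq_trans (big_n t_gt0) _; apply: leq_trans (bin_le_binom_le _ _) _.
  by rewrite leq_pmull ?expn_gt0.
have [t0|t_gt0] := posnP t.
  apply: leq_trans (card_D_core_tight s0 (or_intror t0)) _.
  by rewrite t0 !binom_le0 !muln1 leq_pexp2l ?card_core.
have := card_core s0; rewrite leq_eqVlt => /orP[/eqP core_r|lt_core].
  by apply: leq_trans (card_D_core_tight s0 (or_introl core_r)) _; rewrite core_r.
apply: leq_trans (card_D_core s0) _.
apply: leq_trans (leq_mul (leqnn _) (leq_add (leqnn _) Bu_le)) _.
rewrite -(prednK t_gt0) binom_le_absorb // prednK //.
by apply: leq_trans (big_n t_gt0); rewrite leq_mul2r /extremal_const -addnA leq_addl orbT.
Qed.

End Extremal.

Theorem theorem3 (k d : nat) (hk : 0 < k) (hd : 0 < d) :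
  forall r : nat, r <= k - 1 -> d = r %[mod k] ->
  exists n0 : nat, forall n : nat, n0 <= n ->
    forall A : {set {set 'I_n}},
      VC (symdk A k) <= d ->
      #|A| <= 2 ^ r * binom_le (n - r) (d %/ k).
Proof.
move=> r le_rk dr; have -> : r = d %% k by rewrite dr modn_small //; lia.
have [n1 big_n] : exists n1, forall n, n1 <= n -> 0 < d %/ k ->
    extremal_const k d * n ^ (d %/ k).-1 <= 'C(n - d %% k, d %/ k).
  have [t0|t_gt0] := posnP (d %/ k); first by exists 0 => n _; rewrite t0.
  have [n1 big_n1] := bin_dominates_expn (extremal_const k d) (d %% k) t_gt0.
  by exists n1 => n /big_n1.
exists n1.+1 => n le_n A VCA; have [D Ddown [<- shD]] := downshift_exists k A.
have union_le (s : seq {set 'I_n}) : size s <= k -> all (mem D) s ->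
    #|\bigcup_(X <- s) X| <= d.
  move=> sk sD; have [->|s_neq0] := eqVneq s [::]; first by rewrite big_nil cards0.
  apply: leq_trans (card_le_VC (downclosed_shattered Ddown s_neq0 sk sD)) _.
  exact: leq_trans (leq_VC shD) VCA.
have := card_D_extremal hk Ddown union_le; rewrite card_ord; apply.
  exact: leq_ltn_trans le_n.
exact: big_n (ltnW le_n).
Qed.
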